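(* Let $m,K$ be positive integers and $b_1,\dots,b_{3m}$ positive integers with $K/4<b_i<K/2$ and $\sum_i b_i=mK$. Set $W=100(5m)^2K$, $a_i=b_i+W$, $L=3W+K$, $\epsilon=1/(400(5m)^2)$, $h=\lfloor 4\epsilon L\rfloor$, $H=L+h$, $\beta_0=h/H$, $\beta_i=a_i/H-1/3$ ($1\le i\le 3m$). Let $X$ be the multiset consisting of $a_1,\dots,a_{3m}$, $m$ copies of $-H$ and $m$ copies of $h$, and let $T_{\min}$ be a minimum-cost addition tree over $X$. If a node $z$ of $T_{\min}$ has value of the form $(1/3+\lambda)H$, then $z$ is a leaf.
   Context: An addition tree over a multiset $X$ is a full binary tree whose leaves are labeled by the elements of $X$ (each used once), each internal node having value equal to the sum of its children's values; its cost is the sum of the absolute values of its internal nodes, and $T_{\min}$ minimizes the cost. A ''$\lambda$'' denotes a sum of at most $5m$ numbers each of the form $\pm\beta_i$ with $0\le i\le 3m$. Every node value can be written as $(N/3+\lambda)H$ with $N$ an integer; since $|\lambda|\le 1/(500m)$, $N$ and the value of $\lambda$ are uniquely determined. *)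

From mathcomp Require Import all_boot all_order all_algebra.
Set Implicit Arguments. Unset Strict Implicit. Unset Printing Implicit Defensive.
Import Order.TTheory GRing.Theory Num.Theory.
Local Open Scope ring_scope.

Inductive tree : Type := Leaf of int | Node of tree & tree.

Fixpoint nval (t : tree) : int :=
  match t with Leaf x => x | Node l r => nval l + nval r end.

Fixpoint leaves (t : tree) : seq int :=
  match t with Leaf x => [:: x] | Node l r => leaves l ++ leaves r end.

Fixpoint cost (t : tree) : int :=
  match t with
  | Leaf _ => 0
  | Node l r => `|nval l + nval r| + cost l + cost r
  end.

Fixpoint is_node (z t : tree) : Prop :=
  z = t \/ match t with Leaf _ => False | Node l r => is_node z l \/ is_node z r end.

Definition addition_tree (X : seq int) (t : tree) : Prop := perm_eq (leaves t) X.

Definition min_addition_tree (X : seq int) (t : tree) : Prop :=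
  addition_tree X t /\ forall t', addition_tree X t' -> cost t <= cost t'.

Section Params.
Variables (m K : nat) (b : nat -> nat).

Definition W : nat := (100 * (5 * m) ^ 2 * K)%N.
Definition a (i : nat) : nat := (b i + W)%N.
Definition L : nat := (3 * W + K)%N.
Definition eps : rat := 1 / (400 * ((5 * m) ^ 2)%:R).
Definition h : int := Num.floor (4 * eps * L%:R).
Definition H : int := L%:Z + h.
Definition beta (i : nat) : rat :=
  if i == 0%N then h%:~R / H%:~R else (a i)%:R / H%:~R - 1 / 3.

Definition Xms : seq int :=
  [seq (a i)%:Z | i <- iota 1 (3 * m)] ++ nseq m (- H) ++ nseq m h.

Definition is_lambda (lam : rat) : Prop :=
  exists s : seq (bool * nat),
    (size s <= 5 * m)%N /\ all (fun p => (p.2 <= 3 * m)%N) s /\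
    lam = \sum_(p <- s) (if p.1 then - beta p.2 else beta p.2).
End Params.

From Pilot Require Import Defs.
From mathcomp Require Import all_boot all_order all_algebra.
From mathcomp Require Import ring lra zify.
Import Order.TTheory GRing.Theory Num.Theory.
Local Open Scope ring_scope.

(* Round every leaf x of X to the integer N with 3x ~ N H: -H to -3, h to 0
   and a_i to 1.  For every tree over X, 3 * cost and H * (cost of the rounded
   tree) differ by at most 12K (5m)^2 < H/2, so a minimum tree T also
   minimises the rounded cost.  Grouping each -H with three a_i and one h gives
   rounded cost 3m, while a tree over {-3, 0, 1} with m leaves -3 and value 0
   costs at least 3m, and more if some inner node has value 1.  Hence no inner
   node of the rounded T has value 1; yet a node of value (1/3 + lambda) H
   rounds to 1 because |lambda| H is small. *)

Fixpoint tmap (f : int -> int) (t : tree) : tree :=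
  match t with Leaf x => Leaf (f x) | Node l r => Node (tmap f l) (tmap f r) end.

Lemma leaves_tmap f t : leaves (tmap f t) = map f (leaves t).
Proof. by elim: t => [x|l IHl r IHr] //=; rewrite map_cat IHl IHr. Qed.

Lemma nval_sum t : nval t = \sum_(x <- leaves t) x.
Proof. by elim: t => [x|l IHl r IHr] /=; rewrite ?big_seq1 // big_cat IHl IHr. Qed.

Lemma size_leaves_gt0 t : (0 < size (leaves t))%N.
Proof. by elim: t => [x|l IHl r IHr] //=; rewrite size_cat addn_gt0 IHl. Qed.

Lemma is_node_tmap f {z t} : is_node z t -> is_node (tmap f z) (tmap f t).
Proof.
elim: t => [x|l IHl r IHr] /=; first by case=> [->|[]] /=; left.
case=> [->|[/IHl ?|/IHr ?]]; first by left.
  by right; left.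
by right; right.
Qed.

Lemma is_node_subseq z t : is_node z t -> subseq (leaves z) (leaves t).
Proof.
elim: t => [x|l IHl r IHr] /=; first by case=> [->|[]] /=; rewrite eqxx.
case=> [->|[/IHl|/IHr]]; first exact: subseq_refl.
  by move/subseq_trans; apply; apply: prefix_subseq.
by move/subseq_trans; apply; apply: suffix_subseq.
Qed.

Fixpoint has_inner1 (t : tree) : bool :=
  match t with
  | Leaf _ => false
  | Node l r => (nval l + nval r == 1) || has_inner1 l || has_inner1 r
  end.

Lemma has_inner1_node l r t :
  is_node (Node l r) t -> nval l + nval r = 1 -> has_inner1 t.
Proof.
move=> + lr1; elim: t => [x|l' IHl r' IHr] /=; first by case=> [|[]].
by case=> [[<- <-]|[/IHl|/IHr] ->]; rewrite ?lr1 ?eqxx ?orbT.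
Qed.

Definition potential (n : int) : int :=
  if n <= -3 then n else if n == -2 then -1 else if n <= 1 then 0 else n.

Lemma potentialD (x y : int) :
  potential (x + y) - `|x + y| <= potential x + potential y.
Proof. by rewrite /potential; repeat case: ifP; lia. Qed.

Lemma potentialD1 {x y : int} : x + y = 1 -> 0 <= potential x + potential y.
Proof. by rewrite /potential; repeat case: ifP; lia. Qed.

Lemma cost_ge_potential {t} : all (mem [:: -3; 0; 1]) (leaves t) ->
  3 * (count (< 0) (leaves t))%:Z + potential (nval t) + has_inner1 t <= cost t.
Proof.
elim: t => [x|l IHl r IHr] /=.
  by rewrite !inE andbT => /or3P [] /eqP ->.
rewrite all_cat => /andP [/IHl {}IHl /IHr {}IHr].
rewrite count_cat PoszD.
case: eqP => [lr1|_] /=.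
  have := potentialD1 lr1; rewrite lr1 (_ : potential 1 = 0) //.
  by case: (has_inner1 l) IHl; case: (has_inner1 r) IHr => /=; lia.
have := potentialD (nval l) (nval r).
by case: (has_inner1 l) IHl; case: (has_inner1 r) IHr => /=; lia.
Qed.

Definition close_on (p q D : int) (f : int -> int) (s : seq int) :=
  {in s, forall x, `|p * x - q * f x| <= D}.

Lemma sqrD_ge {D : int} {x y : nat} : 0 <= D -> (0 < x)%N -> (0 < y)%N ->
  D * (x + y)%N + D * x ^+ 2 + D * y ^+ 2 <= D * (x + y)%N ^+ 2.
Proof.
by move=> D_ge0 x_gt0 y_gt0; rewrite -!mulrDr ler_wpM2l //; nia.
Qed.

Section Rescaling.
Context {p q D : int} {f : int -> int}.
Local Notation close_on := (close_on p q D f).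

Lemma close_on_sub {s1 s2} : {subset s1 <= s2} -> close_on s2 -> close_on s1.
Proof. by move=> sub cl x /sub; apply: cl. Qed.

Lemma close_on_ge0 {t} : close_on (leaves t) -> 0 <= D.
Proof.
case: (leaves t) (size_leaves_gt0 t) => // x s _ cl.
exact: le_trans (normr_ge0 _) (cl x (mem_head _ _)).
Qed.

Lemma nval_tmap_close {t} : close_on (leaves t) ->
  `|p * nval t - q * nval (tmap f t)| <= D * (size (leaves t))%:Z.
Proof.
move=> cl; rewrite !nval_sum leaves_tmap big_map !mulr_sumr -sumrB.
apply: le_trans (ler_norm_sum _ _ _) _.
rewrite -sum1_size -natz natr_sum mulr_sumr big_seq_cond [X in _ <= X]big_seq_cond.
by apply: ler_sum => x /andP [lx _]; rewrite mulr1 cl.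
Qed.

Lemma is_node_tmap_close {z t} : is_node z t -> close_on (leaves t) ->
  `|p * nval z - q * nval (tmap f z)| <= D * (size (leaves t))%:Z.
Proof.
move=> /is_node_subseq sub cl; have D_ge0 := close_on_ge0 cl.
have clz : close_on (leaves z) by apply: close_on_sub cl; apply: mem_subseq.
apply: le_trans (nval_tmap_close clz) _.
by rewrite ler_wpM2l // lez_nat size_subseq.
Qed.

Hypotheses (p_ge0 : 0 <= p) (q_ge0 : 0 <= q).

Lemma cost_tmap_close {t} : close_on (leaves t) ->
  `|p * cost t - q * cost (tmap f t)| <= D * (size (leaves t))%:Z ^+ 2.
Proof.
elim: t => [x|l IHl r IHr] cl; have D_ge0 := close_on_ge0 cl.
  by rewrite /= !mulr0 subrr normr0 expr1n mulr1.
have sub_l : {subset leaves l <= leaves (Node l r)} by move=> x lx; rewrite mem_cat lx.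
have sub_r : {subset leaves r <= leaves (Node l r)} by move=> x rx; rewrite mem_cat rx orbT.
have costl := IHl (close_on_sub sub_l cl); have costr := IHr (close_on_sub sub_r cl).
have root := nval_tmap_close cl.
have := ler_dist_dist (p * nval (Node l r)) (q * nval (tmap f (Node l r))).
rewrite !normrM (ger0_norm p_ge0) (ger0_norm q_ge0) => root_abs.
move: costl costr root (size_leaves_gt0 l) (size_leaves_gt0 r); rewrite /= size_cat.
move: (size (leaves l)) (size (leaves r)) => nl nr costl costr root nl_gt0 nr_gt0.
apply: le_trans _ (sqrD_ge D_ge0 nl_gt0 nr_gt0).
have regroup (a1 b1 c1 a2 b2 c2 : int) : p * (a1 + b1 + c1) - q * (a2 + b2 + c2)
    = (p * a1 - q * a2) + (p * b1 - q * b2) + (p * c1 - q * c2) by ring.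
rewrite regroup; apply: le_trans (ler_normD _ _) _; apply: lerD costr.
apply: le_trans (ler_normD _ _) _; apply: lerD costl.
exact: le_trans root_abs root.
Qed.

End Rescaling.

Lemma nval_tmap_perm f {t1 t2} : perm_eq (leaves t1) (leaves t2) ->
  nval (tmap f t1) = nval (tmap f t2).
Proof. by move=> perm12; rewrite !nval_sum !leaves_tmap !big_map; apply: perm_big. Qed.

Lemma min_tree_tmap_cost {p q D : int} {f X T G} : 0 <= p -> 0 < q ->
  close_on p q D f X -> 2 * (D * (size X)%:Z ^+ 2) < q ->
  min_addition_tree X T -> addition_tree X G -> cost (tmap f T) <= cost (tmap f G).
Proof.
move=> p_ge0 q_gt0 clX E_lt [permT minT] permG.
have cl_of t : perm_eq (leaves t) X -> close_on p q D f (leaves t).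
  by move=> permt; apply: close_on_sub clX => x; rewrite (perm_mem permt).
have := cost_tmap_close p_ge0 (ltW q_gt0) (cl_of T permT).
have := cost_tmap_close p_ge0 (ltW q_gt0) (cl_of G permG).
rewrite (perm_size permT) (perm_size permG) => closeG closeT.
have costTG : p * cost T <= p * cost G by rewrite ler_wpM2l // minT.
move: (D * _) E_lt closeG closeT => E E_lt closeG closeT.
have : q * cost (tmap f T) < q * (cost (tmap f G) + 1) by lia.
by rewrite ltr_pM2l // ltzD1.
Qed.

Lemma close_multiple_eq1 {Hv x n P : int} : 0 < Hv -> 2 * P < Hv ->
  `|x - Hv * n| <= P -> `|x - Hv| <= P -> n = 1.
Proof.
move=> Hv_gt0 P_lt close_n close_1.
have : `|Hv * (n - 1)| < Hv * 1.
  rewrite (_ : Hv * (n - 1) = (x - Hv) - (x - Hv * n)); last by ring.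
  by apply: le_lt_trans (ler_normB _ _) _; lia.
by rewrite normrM gtr0_norm // ltr_pM2l //; lia.
Qed.

(* The paper's N of a leaf: 3x ~ N Hv for the leaves -H, h and a_i of X. *)
Definition round3 (Hv x : int) : int :=
  if x < 0 then -3 else if 6 * x < Hv then 0 else 1.

Lemma round3_mem Hv x : round3 Hv x \in [:: -3; 0; 1].
Proof. by rewrite /round3; case: ifP => _; [|case: ifP]. Qed.

Lemma round3_lt0 Hv x : (round3 Hv x < 0) = (x < 0).
Proof. by rewrite /round3; case: ifP => _; [|case: ifP]. Qed.

Lemma round3_neg (Hv x : int) : x < 0 -> round3 Hv x = -3.
Proof. by rewrite /round3 => ->. Qed.

Lemma round3_small (Hv x : int) : 0 <= x -> 6 * x < Hv -> round3 Hv x = 0.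
Proof. by move=> x_ge0 small; rewrite /round3 le_gtF // small. Qed.

Lemma round3_third (Hv x : int) : 0 <= x -> Hv <= 6 * x -> round3 Hv x = 1.
Proof. by move=> x_ge0 big; rewrite /round3 !le_gtF. Qed.

Lemma min_tree_no_inner1 {Hv D : int} {X T G} : 0 < Hv ->
  close_on 3 Hv D (round3 Hv) X -> 2 * (D * (size X)%:Z ^+ 2) < Hv ->
  min_addition_tree X T -> addition_tree X G ->
  nval (tmap (round3 Hv) G) = 0 -> cost (tmap (round3 Hv) G) <= 3 * (count (< 0) X)%:Z ->
  ~~ has_inner1 (tmap (round3 Hv) T).
Proof.
move=> Hv_gt0 clX E_lt minT permG nvalG costG.
have costTG := min_tree_tmap_cost (isT : 0 <= 3 :> int) Hv_gt0 clX E_lt minT permG.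
have round3_leaves : all (mem [:: -3; 0; 1]) (leaves (tmap (round3 Hv) T)).
  by rewrite leaves_tmap all_map; apply/allP => x _; apply: round3_mem.
have permTG : perm_eq (leaves T) (leaves G) by rewrite (permPr permG); exact: minT.1.
have countT : count (< 0) (leaves (tmap (round3 Hv) T)) = count (< 0) X.
  by rewrite leaves_tmap count_map -(permP minT.1); apply: eq_count => x; apply: round3_lt0.
have := cost_ge_potential round3_leaves.
rewrite countT (nval_tmap_perm _ permTG) nvalG (_ : potential 0 = 0) //.
by case: has_inner1 => //; rewrite (_ : Posz true = 1) //; lia.
Qed.

Definition triple_tree (a : nat -> int) (u : int) (j : nat) : tree :=
  Node (Node (Node (Leaf u) (Leaf (a (3 * j).+1))) (Leaf (a (3 * j).+2)))
       (Leaf (a (3 * j).+3)).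

Fixpoint grouped_tree (a : nat -> int) (u v : int) (k : nat) : tree :=
  match k with
  | 0 => Node (triple_tree a u 0) (Leaf v)
  | k'.+1 => Node (Node (triple_tree a u k) (Leaf v)) (grouped_tree a u v k')
  end.

Lemma tmap_grouped_tree f a u v k :
  tmap f (grouped_tree a u v k) = grouped_tree (f \o a) (f u) (f v) k.
Proof. by elim: k => [|k IHk] //=; rewrite IHk. Qed.

Lemma perm_grouped_tree a u v k : perm_eq (leaves (grouped_tree a u v k))
  ([seq a i | i <- iota 1 (3 * k.+1)] ++ nseq k.+1 u ++ nseq k.+1 v).
Proof.
apply/permP => P; elim: k => [|k IHk]; first by rewrite /= muln0; lia.
rewrite [LHS]/= !count_cat IHk (_ : (3 * k.+2 = 3 * k.+1 + 3)%N); last by lia.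
by rewrite iotaD !map_cat !count_cat !count_nseq /= add1n; lia.
Qed.

Lemma nval_cost_grouped_tree a k :
  (forall i, (1 <= i <= 3 * k.+1)%N -> a i = 1) ->
  nval (grouped_tree a (-3) 0 k) = 0 /\ cost (grouped_tree a (-3) 0 k) = 3 * k.+1%:Z.
Proof.
elim: k => [|k IHk] a1 /=; first by rewrite !a1 //; lia.
have [|-> ->] := IHk; first by move=> i i_le; apply: a1; lia.
by rewrite !a1; lia.
Qed.

Lemma norm_signed_sum_le {R : numDomainType} {f : nat -> R} {n : nat} {B : R}
    {s : seq (bool * nat)} :
  all (fun p => (p.2 <= n)%N) s -> (forall i, (i <= n)%N -> `|f i| <= B) ->
  `|\sum_(p <- s) (if p.1 then - f p.2 else f p.2)| <= (size s)%:R * B.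
Proof.
move=> s_idx f_le; elim: s s_idx => [|[sg i] s IHs] /=; first by rewrite big_nil normr0 mul0r.
case/andP=> i_le /IHs {}IHs; rewrite big_cons mulrSr mulrDl mul1r [X in _ <= X]addrC.
apply: le_trans (ler_normD _ _) (lerD _ IHs).
by case: sg; rewrite ?normrN f_le.
Qed.

Lemma ler_norm_intr (R : numDomainType) (x y : int) :
  (`|x%:~R| <= y%:~R :> R) = (`|x| <= y).
Proof. by rewrite -intr_norm ler_int. Qed.

Section Instance.
Context {m K : nat} {b : nat -> nat}.
Hypotheses (m_gt0 : (0 < m)%N) (K_gt0 : (0 < K)%N).
Hypothesis b_lt : forall i, (1 <= i <= 3 * m)%N -> (b i < K)%N.

Local Notation M := ((5 * m) ^ 2)%N.
Local Notation H := (H m K).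
Local Notation h := (h m K).

(* [h] and [H] are generalized before [lia] and before matching against cast
   lemmas: otherwise Rocq unfolds them and evaluates the floor in [h]. *)

Lemma M_ge_m : (m <= M)%N.
Proof. rewrite expnS expn1; nia. Qed.

Lemma M_gt0 : (0 < M)%N.
Proof. exact: leq_trans m_gt0 M_ge_m. Qed.

Lemma four_eps_L : 4 * eps m * (L m K)%:R = 3 * K%:R + K%:R / (100 * M)%:R.
Proof.
rewrite /eps /L /W; move: M M_gt0 => N N_gt0.
rewrite natrD !natrM; field.
by rewrite pnatr_eq0 -lt0n.
Qed.

Lemma h_bounds : 3 * K%:Z <= h <= 4 * K%:Z.
Proof.
have M100_gt0 : (0 < 100 * M)%N by rewrite muln_gt0 M_gt0.
rewrite /Defs.h four_eps_L.
have : 0 <= K%:R / (100 * M)%:R :> rat by rewrite divr_ge0.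
have : K%:R / (100 * M)%:R <= K%:R :> rat.
  by rewrite ler_pdivrMr ?ltr0n // ler_peMr ?ler0n // ler1n.
move: (K%:R / _) => frac frac_le frac_ge0.
have cast3 : (3 * K%:Z)%:~R = 3 * K%:R :> rat by rewrite intrM -pmulrn.
have cast4 : (4 * K%:Z + 1)%:~R = 4 * K%:R + 1 :> rat.
  by rewrite intrD intrM -pmulrn.
by rewrite floor_ge_int -ltzD1 floor_lt_int cast3 cast4; apply/andP; split; lra.
Qed.

Lemma H_eq : H = 300 * (M * K)%:Z + K%:Z + h.
Proof. rewrite /Defs.H /L /W; lia. Qed.

Lemma a_eq i : (a m K b i)%:Z = (b i)%:Z + 100 * (M * K)%:Z.
Proof. rewrite /a /W; lia. Qed.

Lemma K_le_MK : (K <= M * K)%N.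
Proof. by rewrite leq_pmull ?M_gt0. Qed.

Lemma H_gt0 : 0 < H.
Proof.
have /andP [h_ge _] := h_bounds.
by rewrite H_eq; move: (h) (M * K)%N h_ge => hh MK; lia.
Qed.

Lemma round3_a {i} : (1 <= i <= 3 * m)%N -> round3 H (a m K b i) = 1.
Proof.
move=> /b_lt bK; apply: round3_third; first by [].
have /andP [h_ge h_le] := h_bounds.
by rewrite H_eq a_eq; move: (h) (M * K)%N K_le_MK h_ge h_le => hh MK; lia.
Qed.

Lemma a_close {i} : (1 <= i <= 3 * m)%N -> `|3 * (a m K b i)%:Z - H| <= 12 * K%:Z.
Proof.
move=> /b_lt bK; have /andP [h_ge h_le] := h_bounds.
by rewrite H_eq a_eq; move: (h) (M * K)%N h_ge h_le => hh MK; lia.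
Qed.

Lemma round3_oppH : round3 H (- H) = -3.
Proof. by apply: round3_neg; rewrite oppr_lt0 H_gt0. Qed.

Lemma round3_h : round3 H h = 0.
Proof.
have /andP [h_ge h_le] := h_bounds; apply: round3_small.
  by move: (h) h_ge => hh; lia.
by rewrite H_eq; move: (h) (M * K)%N K_le_MK h_ge h_le => hh MK; lia.
Qed.

Lemma mem_Xms x : x \in Xms m K b ->
  [\/ exists2 i, (1 <= i <= 3 * m)%N & x = (a m K b i)%:Z, x = - H | x = h].
Proof.
rewrite !mem_cat => /or3P [/mapP [i i_in ->] | /nseqP [-> _] | /nseqP [-> _]].
- by apply: Or31; exists i; rewrite // mem_iota in i_in; lia.
- exact: Or32.
- exact: Or33.
Qed.

Lemma Xms_close : {in Xms m K b, forall x, `|3 * x - H * round3 H x| <= 12 * K%:Z}.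
Proof.
have /andP [h_ge h_le] := h_bounds.
move=> x /mem_Xms [[i i_in ->] | -> | ->].
- by rewrite (round3_a i_in) mulr1 (a_close i_in).
- by rewrite round3_oppH; move: H => HH; lia.
- by rewrite round3_h mulr0 subr0; move: (h) h_ge h_le => hh; lia.
Qed.

Lemma size_Xms : size (Xms m K b) = (5 * m)%N.
Proof. by rewrite !size_cat size_map size_iota !size_nseq; lia. Qed.

Lemma count_neg_Xms : count (< 0) (Xms m K b) = m.
Proof.
have /andP [h_ge _] := h_bounds.
have h_ge0 : (h < 0) = false by apply: le_gtF; move: (h) h_ge => hh; lia.
rewrite !count_cat count_map (@eq_count _ _ pred0) ?count_pred0; last by [].
rewrite !count_nseq -[(< 0) (- H)]/(- H < 0) -[(< 0) h]/(h < 0).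
by rewrite oppr_lt0 H_gt0 h_ge0 mul1n mul0n add0n addn0.
Qed.

Lemma beta_bound i : (i <= 3 * m)%N -> `|beta m K b i| * H%:~R <= 4 * K%:R.
Proof.
have /andP [h_ge h_le] := h_bounds.
have a_cl (j : nat) : (1 <= j <= 3 * m)%N ->
    `|3 * (a m K b j)%:Z - H| <= 12 * K%:Z := a_close.
rewrite /beta; move: (h) (H) H_gt0 h_ge h_le a_cl => hh HH HH_gt0 h_ge h_le a_cl.
have HH_gt0r : 0 < HH%:~R :> rat by rewrite ltr0z.
rewrite -[X in _ * X](gtr0_norm HH_gt0r) -normrM.
case: eqP => [_ _ | /eqP i_neq0 i_le].
  rewrite divfK ?gt_eqF // (_ : 4 * K%:R = (4 * K%:Z)%:~R); last by rewrite intrM -pmulrn.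
  by rewrite -intr_norm ler_int; lia.
have := a_cl i; rewrite lt0n i_neq0 i_le => /(_ isT).
rewrite -(ler_norm_intr rat) intrB !intrM -(pmulrn 1 (a m K b i)) -(pmulrn 1 K).
rewrite (_ : (_ / _ - 1 / 3) * HH%:~R = (3 * (a m K b i)%:R - HH%:~R) / 3).
  rewrite normrM [`|3^-1|]ger0_norm; first lra.
  by rewrite invr_ge0.
by field; rewrite gt_eqF.
Qed.

Lemma lambda_bound lam : is_lambda m K b lam -> `|lam| * H%:~R <= 20 * (m * K)%:R.
Proof.
case=> s [s_size [s_idx ->]]; have beta_le := beta_bound.
move: (beta m K b) (H) H_gt0 beta_le => bt HH HH_gt0 beta_le.
have HH_gt0r : 0 < HH%:~R :> rat by rewrite ltr0z.
have bt_le i : (i <= 3 * m)%N -> `|bt i| <= 4 * K%:R / HH%:~R.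
  by move=> /beta_le; rewrite ler_pdivlMr.
apply: le_trans (ler_wpM2r (ltW HH_gt0r) (norm_signed_sum_le s_idx bt_le)) _.
rewrite -mulrA (divfK (lt0r_neq0 HH_gt0r)).
rewrite (_ : 20 * (m * K)%:R = (5 * m)%:R * (4 * K%:R)); last by rewrite !natrM; ring.
by rewrite ler_wpM2r ?ler_nat // mulr_ge0 // ler0n.
Qed.

Lemma node_value_close {v : int} {lam} : is_lambda m K b lam ->
  v%:~R = (1 / 3 + lam) * H%:~R -> `|3 * v - H| <= 60 * (m * K)%:Z.
Proof.
move=> /lambda_bound; move: (H) H_gt0 => HH HH_gt0 lam_le v_eq.
rewrite -(ler_norm_intr rat) intrB intrM v_eq -[(3 : int)%:~R]/(3 : rat).
rewrite (_ : 3 * ((1 / 3 + lam) * HH%:~R) - HH%:~R = 3 * (lam * HH%:~R)); last by field.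
rewrite !normrM [`|3|]gtr0_norm // [`|HH%:~R|]gtr0_norm ?ltr0z //.
rewrite -[60 * _]/((60 * (m * K))%N : int) -pmulrn.
rewrite (_ : (60 * (m * K))%:R = 3 * (20 * (m * K)%:R)); last by rewrite natrM; ring.
by rewrite ler_pM2l.
Qed.

Lemma grouped_tree_Xms : exists G, [/\ addition_tree (Xms m K b) G,
  nval (tmap (round3 H) G) = 0 &
  cost (tmap (round3 H) G) <= 3 * (count (< 0) (Xms m K b))%:Z].
Proof.
pose ai i := (a m K b i)%:Z.
have permG := perm_grouped_tree ai (- H) h m.-1; rewrite (prednK m_gt0) in permG.
have [|nval0 cost3] := nval_cost_grouped_tree (round3 H \o ai) m.-1.
  by move=> i; rewrite (prednK m_gt0) => /round3_a.
exists (grouped_tree ai (- H) h m.-1).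
rewrite tmap_grouped_tree round3_oppH round3_h nval0 cost3 (prednK m_gt0) count_neg_Xms.
by split.
Qed.

Lemma Xms_large : 2 * (12 * K%:Z * (size (Xms m K b))%:Z ^+ 2) < H.
Proof.
have /andP [h_ge _] := h_bounds.
rewrite size_Xms H_eq.
by move: (h) h_ge K_le_MK => hh; lia.
Qed.

Lemma subtree_close {T z} : addition_tree (Xms m K b) T -> is_node z T ->
  `|3 * nval z - H * nval (tmap (round3 H) z)| <= 60 * (m * K)%:Z.
Proof.
move=> permT zT; have clT : close_on 3 H (12 * K%:Z) (round3 H) (leaves T).
  by apply: close_on_sub Xms_close => x; rewrite (perm_mem permT).
apply: le_trans (is_node_tmap_close zT clT) _.
by rewrite (perm_size permT) size_Xms; lia.
Qed.

Lemma node_large : 2 * (60 * (m * K)%:Z) < H.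
Proof.
have /andP [h_ge _] := h_bounds.
have mK_le : (m * K <= M * K)%N := leq_mul M_ge_m (leqnn K).
by rewrite H_eq; move: (h) (M * K)%N h_ge mK_le => hh MK; lia.
Qed.

End Instance.

Theorem lemma2p8 (m K : nat) (b : nat -> nat)
  (hm : (0 < m)%N) (hK : (0 < K)%N)
  (hbpos : forall i, (1 <= i <= 3 * m)%N -> (0 < b i)%N)
  (hb : forall i, (1 <= i <= 3 * m)%N ->
          (K%:R / 4 < (b i)%:R :> rat) /\ ((b i)%:R < K%:R / 2 :> rat))
  (hsum : (\sum_(1 <= i < (3 * m).+1) b i)%N = (m * K)%N)
  (T : tree) (hT : min_addition_tree (Xms m K b) T)
  (z : tree) (hz : is_node z T)
  (lam : rat) (hlam : is_lambda m K b lam)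
  (hval : (nval z)%:~R = (1 / 3 + lam) * (H m K)%:~R) :
  exists x, z = Leaf x.
Proof.
have b_lt i : (1 <= i <= 3 * m)%N -> (b i < K)%N.
  move=> /hb [_ b_lt_half]; rewrite -(ltr_nat rat).
  by apply: lt_le_trans b_lt_half _; rewrite ler_pdivrMr // ler_peMr ?ler0n // ler1n.
case: z hz hval => [x _ _ | l r hz hval]; first by exists x.
have [G [permG nvalG costG]] := grouped_tree_Xms hm hK b_lt.
have := min_tree_no_inner1 (H_gt0 hm hK) (Xms_close hm hK b_lt)
  (Xms_large hm hK) hT permG nvalG costG.
have near_N := subtree_close hm hK b_lt hT.1 hz.
have near_1 := node_value_close hm hK b_lt hlam hval.
case/negP; apply: has_inner1_node (is_node_tmap _ hz) _.
exact: close_multiple_eq1 (H_gt0 hm hK) (node_large hm hK) near_N near_1.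
Qed.
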